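(* Let $N$ be an even positive integer and $\hbar=1/(2\pi N)$. Then for every $m\in\{0,\dots,N-1\}$, $XF\Phi_m^{(0,0)}=F\Phi_m^{(0,0)}$ and $YF\Phi_m^{(0,0)}=F\Phi_m^{(0,0)}$.
   Context: On $L^2(\mathbb{R})$ with $[\widehat{x},\widehat{p}]=i\hbar$, $|x\rangle_x$ are position eigen-distributions. $\Phi_m^{(0,0)}=N^{-1/2}\sum_{k\in\mathbb{Z}}|m/N+k\rangle_x$ (periodic $\delta$-comb). $X^s=e^{is\widehat{x}/\hbar}$, $Y^s=e^{is\widehat{p}/\hbar}$ for real $s$ (so $X=e^{2\pi iN\widehat{x}}$, $Y=e^{2\pi iN\widehat{p}}$). Projections $L,R,E_x,O_x$ are multiplication in position representation by the indicators of $[0,1/2)+\mathbb{Z}$, $[1/2,1)+\mathbb{Z}$, $[0,1)+2\mathbb{Z}$, $[1,2)+2\mathbb{Z}$; $B,T,E_p,O_p$ are the analogous projections in momentum representation onto $[0,1/2)+\mathbb{Z}$, $[1/2,1)+\mathbb{Z}$, $[0,1)+2\mathbb{Z}$, $[1,2)+2\mathbb{Z}$; these act on $\delta$-comb distributions by pointwise multiplication by the indicator at the support points. $S=\exp\!\left(-\frac{i\log2}{2\hbar}(\widehat{x}\widehat{p}+\widehat{p}\widehat{x})\right)$, acting on distributions by $S|x\rangle_x=\sqrt2\,|2x\rangle_x$ (so $S^\dagger\widehat{x}S=2\widehat{x}$). The propagator is $F=S(L+X^{-1}R)(E_p+Y^{-1/2}O_p)$, which the paper also writes as $(E_x+X^{-1/2}O_x)(B+Y^{-1}T)S$.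 *)

From Stdlib Require Import Reals ZArith ClassicalEpsilon.
From Coquelicot Require Import Complex.
Open Scope R_scope.

(** A (formal) delta-comb distribution  psi = sum_x c(x) |x>  (position basis),
    represented by its coefficient function c : R -> C (zero off the support).
    The same type is used for momentum-basis combs  sum_p d(p) |p>_p. *)
Definition comb := R -> C.

Definition ind (P : Prop) : C :=
  if excluded_middle_informative P then RtoC 1 else RtoC 0.

Definition cexpi (t : R) : C := (cos t, sin t).

Fixpoint csum (K : nat) (f : nat -> C) : C :=
  match K with O => RtoC 0 | S k => Cplus (csum k f) (f k) end.

Definition on_lattice (b x : R) : Prop := exists k : Z, x = IZR k * b.

Definition IsComb (a : R) (K : nat) (c : comb) : Prop :=
  0 < a /\ (0 < K)%nat /\
  (forall x, c x <> RtoC 0 -> on_lattice a x) /\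
  (forall x, c (x + INR K * a) = c x).

Definition pres (c : comb) : R * nat :=
  epsilon (inhabits (1, 1%nat)) (fun q => IsComb (fst q) (snd q) c).

(** Fourier transform of a periodic lattice comb (Poisson summation):
    sgn = -1 : position -> momentum,  <p|psi> = (2 pi h)^(-1/2) int e^{-ipx/h} psi(x) dx
    sgn = +1 : momentum -> position (inverse transform). *)
Definition dft (sgn h : R) (c : comb) : comb :=
  let a := fst (pres c) in
  let K := snd (pres c) in
  let T := INR K * a in
  fun p => Cmult (Cmult (ind (on_lattice (2 * PI * h / T) p))
                        (RtoC (sqrt (2 * PI * h) / T)))
                 (csum K (fun n => Cmult (c (INR n * a))
                                         (cexpi (sgn * p * (INR n * a) / h)))).

Definition toMom (h : R) (c : comb) : comb := dft (-1) h c.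
Definition toPos (h : R) (d : comb) : comb := dft 1 h d.

Definition cadd (c1 c2 : comb) : comb := fun x => Cplus (c1 x) (c2 x).

(** X^s = exp(i s xhat / h) : multiplication by e^{isx/h} *)
Definition Xop (h s : R) (c : comb) : comb := fun x => Cmult (cexpi (s * x / h)) (c x).
(** Y^s = exp(i s phat / h) : Y^s |x> = |x - s> *)
Definition Yop (s : R) (c : comb) : comb := fun x => c (x + s).
(** S |x> = sqrt 2 |2x> *)
Definition Sop (c : comb) : comb := fun y => Cmult (RtoC (sqrt 2)) (c (y / 2)).

Definition mulind (P : R -> Prop) (c : comb) : comb := fun x => Cmult (ind (P x)) (c x).
Definition momproj (h : R) (P : R -> Prop) (c : comb) : comb :=
  toPos h (fun p => Cmult (ind (P p)) (toMom h c p)).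

Definition Lset (x : R) : Prop := exists k : Z, IZR k <= x < IZR k + / 2.
Definition Rset (x : R) : Prop := exists k : Z, IZR k + / 2 <= x < IZR k + 1.
Definition Eset (x : R) : Prop := exists k : Z, 2 * IZR k <= x < 2 * IZR k + 1.
Definition Oset (x : R) : Prop := exists k : Z, 2 * IZR k + 1 <= x < 2 * IZR k + 2.

Definition Lop := mulind Lset.
Definition Rop := mulind Rset.
Definition Ep (h : R) := momproj h Eset.
Definition Op (h : R) := momproj h Oset.

Definition Fop (h : R) (c : comb) : comb :=
  let v := cadd (Ep h c) (Yop (- / 2) (Op h c)) in
  Sop (cadd (Lop v) (Xop h (-1) (Rop v))).

Definition hbar (N : nat) : R := / (2 * PI * INR N).

Definition Phi (N m : nat) : comb :=
  fun x => Cmult (RtoC (/ sqrt (INR N)))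
                 (ind (exists k : Z, x = INR m / INR N + IZR k)).

(* The momentum wave function of [Phi N m] is again a comb, supported on (1/N)Z and
   1-periodic.  Hence E_p Phi and O_p Phi are one and the same 1-periodic trigonometric sum
   S(x) times a comb on (1/(2N))Z, with an extra phase e^{ix/hbar} for O_p.  So F Phi is
   supported on (1/N)Z, where X = e^{2 pi i N x} acts as 1.  On (1/(2N))Z the phase
   e^{ix/hbar} = e^{i pi l} is a sign, and for even N the shift Y^{-1/2} contributes
   e^{-i pi N} = 1; thus v = (E_p + Y^{-1/2} O_p) Phi satisfies v(x + 1/2) = e^{-ix/hbar} v(x),
   which is exactly the phase compensated by L + X^{-1} R.  Therefore (L + X^{-1} R) v is
   1/2-periodic and F Phi = S (L + X^{-1} R) v is 1-periodic, i.e. Y-invariant. *)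

From Stdlib Require Import Reals ZArith Lra Lia ClassicalEpsilon FunctionalExtensionality.
From Coquelicot Require Import Complex.
Open Scope R_scope.

Lemma cexpi_add a b : cexpi (a + b) = (cexpi a * cexpi b)%C.
Proof.
  unfold cexpi; apply injective_projections; simpl; rewrite ?cos_plus, ?sin_plus; ring.
Qed.

Lemma cexpi_0 : cexpi 0 = 1%C.
Proof. unfold cexpi; rewrite cos_0, sin_0; reflexivity. Qed.

Lemma cexpi_2PI_mult k : cexpi (2 * PI * IZR k) = 1%C.
Proof.
  assert (Hs : sin (PI * IZR k) = 0) by (apply sin_eq_0_1; exists k; ring).
  unfold cexpi; replace (2 * PI * IZR k) with (2 * (PI * IZR k)) by ring.
  rewrite cos_2a_sin, sin_2a, Hs; apply injective_projections; simpl; ring.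
Qed.

(* [cos t = 1 - 2 sin (t/2)^2] reduces the claim to the zeros of [sin]. *)
Lemma cexpi_eq1 t : cexpi t = 1%C <-> exists k : Z, t = 2 * PI * IZR k.
Proof.
  split.
  - intros H; injection H as Hc _.
    replace t with (2 * (t / 2)) in Hc by field; rewrite cos_2a_sin in Hc.
    assert (Hs : sin (t / 2) = 0) by nra.
    destruct (sin_eq_0_0 _ Hs) as [k Hk]; exists k; lra.
  - intros [k ->]; apply cexpi_2PI_mult.
Qed.

Lemma cexpi_opp_eq1 t : cexpi (- t) = 1%C <-> cexpi t = 1%C.
Proof.
  assert (H : (cexpi (- t) * cexpi t)%C = 1%C)
    by (rewrite <- cexpi_add, Rplus_opp_l; apply cexpi_0).
  split; intros E; rewrite E in H.
  - rewrite <- H; ring.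
  - rewrite <- H; ring.
Qed.

Lemma cexpi_opp_PI_mult l : cexpi (- (PI * IZR l)) = cexpi (PI * IZR l).
Proof.
  assert (Hs : sin (PI * IZR l) = 0) by (apply sin_eq_0_1; exists l; ring).
  unfold cexpi; rewrite cos_neg, sin_neg, Hs, Ropp_0; reflexivity.
Qed.

Lemma cexpi_sign_2PI_mult s k : (s = 1 \/ s = -1) -> cexpi (s * (2 * PI * IZR k)) = 1%C.
Proof.
  intros [-> | ->].
  - rewrite Rmult_1_l; apply cexpi_2PI_mult.
  - replace (-1 * _) with (- (2 * PI * IZR k)) by ring.
    apply cexpi_opp_eq1, cexpi_2PI_mult.
Qed.

Lemma cexpi_eq1_mul_nat t j : cexpi t = 1%C -> cexpi (t * INR j) = 1%C.
Proof.
  intros Ht; apply cexpi_eq1 in Ht as [k ->].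
  rewrite INR_IZR_INZ, Rmult_assoc, <- mult_IZR; apply cexpi_2PI_mult.
Qed.

Lemma ind_true (P : Prop) : P -> ind P = 1%C.
Proof. intros H; unfold ind; destruct (excluded_middle_informative P); tauto. Qed.

Lemma ind_false (P : Prop) : ~ P -> ind P = 0%C.
Proof. intros H; unfold ind; destruct (excluded_middle_informative P); tauto. Qed.

Lemma ind_iff (P Q : Prop) : (P <-> Q) -> ind P = ind Q.
Proof.
  intros H; unfold ind.
  destruct (excluded_middle_informative P), (excluded_middle_informative Q); tauto.
Qed.

Lemma on_lattice_shift b x k : on_lattice b (x + IZR k * b) <-> on_lattice b x.
Proof.
  split; intros [j Hj].
  - exists (j - k)%Z; rewrite minus_IZR; lra.
  - exists (j + k)%Z; rewrite plus_IZR, Hj; ring.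
Qed.

Lemma on_lattice_cexpi s h T p : (s = 1 \/ s = -1) -> h <> 0 -> T <> 0 ->
  on_lattice (2 * PI * h / T) p <-> cexpi (s * p * T / h) = 1%C.
Proof.
  intros Hs Hh HT.
  assert (Hsign : cexpi (s * p * T / h) = 1%C <-> cexpi (p * T / h) = 1%C).
  { destruct Hs as [-> | ->].
    - rewrite Rmult_1_l; tauto.
    - replace (-1 * p * T / h) with (- (p * T / h)) by (field; auto);
      apply cexpi_opp_eq1. }
  rewrite Hsign, cexpi_eq1; split; intros [k Hk]; exists k.
  - rewrite Hk; field; auto.
  - replace p with (p * T / h * (h / T)) by (field; auto); rewrite Hk; field; auto.
Qed.

Lemma not_on_lattice_between M q j g : 0 < g -> (0 < j < q)%nat ->
  ~ on_lattice (INR q * g) (INR (M * q + j) * g).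
Proof.
  intros Hg Hj [z Hz].
  assert (E : INR (M * q + j) = IZR z * INR q) by (apply (Rmult_eq_reg_r g); [lra | lra]).
  rewrite !INR_IZR_INZ, <- mult_IZR in E; apply eq_IZR in E.
  rewrite Nat2Z.inj_add, Nat2Z.inj_mul in E.
  assert (Hd : ((z - Z.of_nat M) * Z.of_nat q = Z.of_nat j)%Z) by lia.
  destruct (Z_le_gt_dec (z - Z.of_nat M) 0); nia.
Qed.

Lemma csum_ext K (f g : nat -> C) : (forall n, (n < K)%nat -> f n = g n) -> csum K f = csum K g.
Proof.
  induction K as [|K IH]; intros H; simpl; auto.
  rewrite IH, H; auto.
Qed.

Lemma csum_eq0 K (f : nat -> C) : (forall n, (n < K)%nat -> f n = 0%C) -> csum K f = 0%C.
Proof.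
  induction K as [|K IH]; intros H; simpl; auto.
  rewrite IH, H; auto; ring.
Qed.

Lemma csum_add a b (f : nat -> C) :
  csum (a + b) f = (csum a f + csum b (fun n => f (a + n)%nat))%C.
Proof.
  induction b as [|b IH]; simpl.
  - rewrite Nat.add_0_r; ring.
  - rewrite Nat.add_succ_r; simpl; rewrite IH; ring.
Qed.

Lemma csum_add_eq0_r a b (f : nat -> C) : (forall n, (n < b)%nat -> f (a + n)%nat = 0%C) ->
  csum (a + b) f = csum a f.
Proof. intros H; rewrite csum_add, (csum_eq0 b); [ring | auto]. Qed.

Lemma csum_add_eq0_l a b (f : nat -> C) : (forall n, (n < a)%nat -> f n = 0%C) ->
  csum (a + b) f = csum b (fun n => f (a + n)%nat).
Proof. intros H; rewrite csum_add, (csum_eq0 a); [ring | auto]. Qed.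

Lemma csum_mulr K (f : nat -> C) z : csum K (fun n => f n * z)%C = (csum K f * z)%C.
Proof. induction K as [|K IH]; simpl; [ring | rewrite IH; ring]. Qed.

Lemma csum_const1 r : csum r (fun _ => 1%C) = RtoC (INR r).
Proof.
  induction r as [|r IH]; cbn [csum]; auto.
  rewrite IH, S_INR, RtoC_plus; reflexivity.
Qed.

Lemma csum_first q (f : nat -> C) : (0 < q)%nat -> (forall j, (0 < j < q)%nat -> f j = 0%C) ->
  csum q f = f O.
Proof.
  intros Hq H; replace q with (1 + (q - 1))%nat by lia.
  rewrite csum_add, (csum_eq0 (q - 1)) by (intros; apply H; lia); simpl; ring.
Qed.

Lemma csum_cexpi_geometric t r :
  (csum r (fun j => cexpi (t * INR j)) * (cexpi t - 1))%C = (cexpi (t * INR r) - 1)%C.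
Proof.
  induction r as [|r IH]; simpl csum.
  - rewrite Rmult_0_r, cexpi_0; ring.
  - rewrite Cmult_plus_distr_r, IH, S_INR, Rmult_plus_distr_l, Rmult_1_r, cexpi_add; ring.
Qed.

Lemma csum_cexpi_root_of_unity t r : cexpi t <> 1%C -> cexpi (t * INR r) = 1%C ->
  csum r (fun j => cexpi (t * INR j)) = 0%C.
Proof.
  intros Ht Hr; pose proof (csum_cexpi_geometric t r) as G; rewrite Hr in G.
  assert (Hnz : (cexpi t - 1)%C <> 0%C)
    by (intros E; apply Ht; rewrite <- (Cplus_0_l 1), <- E; ring).
  replace (csum _ _) with (csum r (fun j => cexpi (t * INR j)) * (cexpi t - 1) / (cexpi t - 1))%C
    by (field; auto).
  rewrite G; field; auto.
Qed.

Lemma csum_cexpi_trivial t r : cexpi t = 1%C ->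
  csum r (fun j => cexpi (t * INR j)) = RtoC (INR r).
Proof.
  intros Ht; rewrite <- csum_const1; apply csum_ext.
  intros j _; apply cexpi_eq1_mul_nat, Ht.
Qed.

Lemma csum_quasi_periodic K r t (f : nat -> C) :
  (forall j n, f (K * j + n)%nat = (cexpi (t * INR j) * f n)%C) ->
  csum (K * r) f = (csum r (fun j => cexpi (t * INR j)) * csum K f)%C.
Proof.
  intros Hf; induction r as [|r IH]; simpl csum.
  - rewrite Nat.mul_0_r; simpl; ring.
  - replace (K * S r)%nat with (K * r + K)%nat by lia.
    rewrite csum_add, IH,
      (csum_ext K (fun n => f (K * r + n)%nat) (fun n => f n * cexpi (t * INR r))%C), csum_mulr
      by (intros n _; rewrite Hf; ring).
    ring.
Qed.

Definition lattice_weight (h T p : R) : C :=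
  (ind (on_lattice (2 * PI * h / T) p) * RtoC (sqrt (2 * PI * h) / T))%C.

Definition dft_with (s h a : R) (K : nat) (c : comb) : comb :=
  fun p => (lattice_weight h (INR K * a) p *
            csum K (fun n => c (INR n * a)%R * cexpi (s * p * (INR n * a) / h)%R))%C.

Lemma lattice_weight_off h T p : ~ on_lattice (2 * PI * h / T) p -> lattice_weight h T p = 0%C.
Proof. intros H; unfold lattice_weight; rewrite ind_false by auto; ring. Qed.

Lemma lattice_weight_shift h T p k :
  lattice_weight h T (p + IZR k * (2 * PI * h / T)) = lattice_weight h T p.
Proof. unfold lattice_weight; rewrite (ind_iff _ _ (on_lattice_shift _ p k)); reflexivity. Qed.

Lemma IsComb_period a K (c : comb) r x : IsComb a K c -> c (x + INR r * (INR K * a)) = c x.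
Proof.
  intros (_ & _ & _ & Hper); revert x; induction r as [|r IH]; intros x.
  - simpl; rewrite Rmult_0_l, Rplus_0_r; reflexivity.
  - replace (x + INR (S r) * (INR K * a)) with (x + INR r * (INR K * a) + INR K * a)
      by (rewrite S_INR; ring).
    rewrite Hper; apply IH.
Qed.

Lemma IsComb_mul_period a K r (c : comb) : IsComb a K c -> (0 < r)%nat -> IsComb a (K * r) c.
Proof.
  intros Hc Hr; pose proof Hc as (Ha & HK & Hsupp & _).
  repeat split; auto; [lia |].
  intros x; rewrite mult_INR, (Rmult_comm (INR K)), Rmult_assoc; apply IsComb_period, Hc.
Qed.

Lemma IsComb_mulind a K P (c : comb) : IsComb a K c -> (forall x, P (x + INR K * a) <-> P x) ->
  IsComb a K (mulind P c).
Proof.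
  intros (Ha & HK & Hsupp & Hper) HP; repeat split; auto.
  - intros x Hx; apply Hsupp; intros E; apply Hx; unfold mulind; rewrite E; ring.
  - intros x; unfold mulind; rewrite Hper, (ind_iff _ _ (HP x)); reflexivity.
Qed.

Lemma IsComb_commensurable a K b L (c : comb) : IsComb a K c -> IsComb b L c ->
  (exists x, c x <> 0%C) -> exists z : nat, (0 < z)%nat /\ INR K * a = INR z * b.
Proof.
  intros (Ha & HK & _ & Hper) (Hb & _ & Hsupp & _) [x Hx].
  destruct (Hsupp x Hx) as [i Hi].
  destruct (Hsupp (x + INR K * a)) as [j Hj]; [rewrite Hper; auto |].
  assert (HKa : 0 < INR K * a) by (apply Rmult_lt_0_compat; auto; apply lt_0_INR; auto).
  assert (Hij : (i < j)%Z) by (apply lt_IZR; apply (Rmult_lt_reg_r b); lra).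
  exists (Z.to_nat (j - i)); split; [lia |].
  rewrite (INR_IZR_INZ (Z.to_nat _)), Z2Nat.id, minus_IZR by lia; lra.
Qed.

Lemma dft_with_mul_period s h a K r (c : comb) : (s = 1 \/ s = -1) -> h <> 0 -> IsComb a K c ->
  (0 < r)%nat -> dft_with s h a (K * r) c = dft_with s h a K c.
Proof.
  intros Hs Hh Hc Hr; pose proof Hc as (Ha & HK & _).
  apply functional_extensionality; intros p; unfold dft_with, lattice_weight.
  set (T := INR K * a); set (t := s * p * T / h).
  assert (HT : 0 < T) by (apply Rmult_lt_0_compat; auto; apply lt_0_INR; auto).
  assert (Hr' : 0 < INR r) by (apply lt_0_INR; auto).
  rewrite (csum_quasi_periodic K r t).
  2: { intros j n; rewrite plus_INR, mult_INR.
       replace ((INR K * INR j + INR n) * a) with (INR n * a + INR j * (INR K * a)) by ring.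
       rewrite IsComb_period by auto.
       replace (s * p * (INR n * a + INR j * (INR K * a)) / h)
         with (s * p * (INR n * a) / h + t * INR j)
         by (unfold t, T; field; auto).
       rewrite cexpi_add; ring. }
  replace (INR (K * r) * a) with (INR r * T) by (rewrite mult_INR; unfold T; ring).
  rewrite (ind_iff _ _ (on_lattice_cexpi s h T p Hs Hh ltac:(lra))),
    (ind_iff _ _ (on_lattice_cexpi s h (INR r * T) p Hs Hh ltac:(nra))).
  replace (s * p * (INR r * T) / h) with (t * INR r) by (unfold t; field; auto); fold t.
  destruct (classic (cexpi t = 1%C)) as [H1 | H1].
  - rewrite csum_cexpi_trivial, !ind_true by (auto using cexpi_eq1_mul_nat).
    replace (sqrt (2 * PI * h) / T) with (sqrt (2 * PI * h) / (INR r * T) * INR r)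
      by (field; lra).
    rewrite RtoC_mult; ring.
  - rewrite (ind_false (cexpi t = 1%C)) by auto.
    destruct (classic (cexpi (t * INR r) = 1%C)).
    + rewrite csum_cexpi_root_of_unity by auto; ring.
    + rewrite ind_false by auto; ring.
Qed.

Lemma dft_with_refine s h g q M (c : comb) : (0 < q)%nat -> 0 < g ->
  (forall x, c x <> 0%C -> on_lattice (INR q * g) x) ->
  dft_with s h (INR q * g) M c = dft_with s h g (M * q) c.
Proof.
  intros Hq Hg Hsupp; apply functional_extensionality; intros p; unfold dft_with.
  replace (INR (M * q) * g) with (INR M * (INR q * g)) by (rewrite mult_INR; ring).
  f_equal; induction M as [|M IH]; [reflexivity |].
  replace (S M * q)%nat with (M * q + q)%nat by lia.
  rewrite csum_add, <- IH; cbn [csum]; f_equal.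
  rewrite csum_first; auto.
  - rewrite Nat.add_0_r, mult_INR, (Rmult_assoc (INR M) (INR q) g); reflexivity.
  - intros j Hj; destruct (classic (c (INR (M * q + j) * g) = 0%C)) as [E | E].
    + rewrite E; ring.
    + exfalso; apply (not_on_lattice_between M q j g); auto.
Qed.

(* [dft] reads spacing and period off a presentation chosen by [epsilon]; two presentations
   of a nonzero comb have commensurable periods and refine to a common one. *)
Lemma dft_with_indep s h a K b L (c : comb) : (s = 1 \/ s = -1) -> h <> 0 ->
  IsComb a K c -> IsComb b L c -> dft_with s h a K c = dft_with s h b L c.
Proof.
  intros Hs Hh Hca Hcb.
  destruct (classic (exists x, c x <> 0%C)) as [Hnz | Hz].
  2: { assert (Hc0 : forall x, c x = 0%C) by (intros x; apply NNPP; eauto).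
       apply functional_extensionality; intros p; unfold dft_with.
       rewrite !csum_eq0 by (intros n _; rewrite Hc0; ring); ring. }
  destruct (IsComb_commensurable a K b L c Hca Hcb Hnz) as (z & Hz & HKa).
  pose proof Hca as (Ha & HK & Hsa & _); pose proof Hcb as (Hb & HL & Hsb & _).
  assert (HKp : 0 < INR K) by (apply lt_0_INR; auto).
  set (g := b / INR K).
  assert (Hg : 0 < g) by (unfold g; apply Rdiv_lt_0_compat; auto).
  assert (Hag : a = INR z * g)
    by (unfold g; apply (Rmult_eq_reg_l (INR K)); [rewrite HKa; field |]; lra).
  assert (Hbg : b = INR K * g) by (unfold g; field; lra).
  rewrite <- (dft_with_mul_period s h a K L c), <- (dft_with_mul_period s h b L z c) by auto.
  rewrite Hag at 1; rewrite dft_with_refine by (rewrite <- ?Hag; auto).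
  rewrite Hbg at 1; rewrite dft_with_refine by (rewrite <- ?Hbg; auto).
  f_equal; lia.
Qed.

Lemma dft_eq s h a K (c : comb) : (s = 1 \/ s = -1) -> h <> 0 -> IsComb a K c ->
  dft s h c = dft_with s h a K c.
Proof.
  intros Hs Hh Hc; apply dft_with_indep; auto.
  apply (epsilon_spec (inhabits (1, 1%nat)) (fun q => IsComb (fst q) (snd q) c)).
  exists (a, K); exact Hc.
Qed.

Lemma dft_with_comb s h a K (c : comb) : (s = 1 \/ s = -1) -> 0 < h -> 0 < a -> (0 < K)%nat ->
  IsComb (2 * PI * h / (INR K * a)) K (dft_with s h a K c).
Proof.
  intros Hs Hh Ha HK; pose proof PI_RGT_0.
  assert (HKp : 0 < INR K) by (apply lt_0_INR; auto).
  repeat split; auto.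
  - apply Rdiv_lt_0_compat; [nra | apply Rmult_lt_0_compat; auto].
  - intros p Hp; apply NNPP; intros Hoff; apply Hp; unfold dft_with.
    rewrite lattice_weight_off by auto; ring.
  - intros p; unfold dft_with.
    rewrite (INR_IZR_INZ K) at 2; rewrite lattice_weight_shift; f_equal.
    apply csum_ext; intros n _; f_equal.
    replace (s * (p + INR K * (2 * PI * h / (INR K * a))) * (INR n * a) / h)
      with (s * p * (INR n * a) / h + s * (2 * PI * IZR (Z.of_nat n)))
      by (rewrite <- !INR_IZR_INZ; field; lra).
    rewrite cexpi_add, cexpi_sign_2PI_mult by auto; ring.
Qed.

Lemma Eset_add2 x : Eset (x + 2) <-> Eset x.
Proof.
  split; intros [k Hk].
  - exists (k - 1)%Z; rewrite minus_IZR; lra.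
  - exists (k + 1)%Z; rewrite plus_IZR; lra.
Qed.

Lemma Oset_add2 x : Oset (x + 2) <-> Oset x.
Proof.
  split; intros [k Hk].
  - exists (k - 1)%Z; rewrite minus_IZR; lra.
  - exists (k + 1)%Z; rewrite plus_IZR; lra.
Qed.

Lemma Eset_not_Oset_01 x : 0 <= x < 1 -> Eset x /\ ~ Oset x.
Proof.
  intros Hx; split; [exists 0%Z; simpl; lra |].
  intros [k Hk]; assert (k < 0)%Z by (apply lt_IZR; simpl; lra).
  assert (-1 < k)%Z by (apply lt_IZR; simpl; lra); lia.
Qed.

Lemma Oset_not_Eset_12 x : 1 <= x < 2 -> Oset x /\ ~ Eset x.
Proof.
  intros Hx; split; [exists 0%Z; simpl; lra |].
  intros [k Hk]; assert (k < 1)%Z by (apply lt_IZR; simpl; lra).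
  assert (0 < k)%Z by (apply lt_IZR; simpl; lra); lia.
Qed.

Lemma Lset_add_half x : Lset (x + / 2) <-> Rset x.
Proof.
  split; intros [k Hk].
  - exists (k - 1)%Z; rewrite minus_IZR; lra.
  - exists (k + 1)%Z; rewrite plus_IZR; lra.
Qed.

Lemma Rset_add_half x : Rset (x + / 2) <-> Lset x.
Proof. split; intros [k Hk]; exists k; lra. Qed.

Lemma INR_div_lt1 n N : (n < N)%nat -> 0 <= INR n / INR N < 1.
Proof.
  intros H; assert (0 < INR N) by (apply lt_0_INR; lia).
  assert (INR n < INR N) by (apply lt_INR; auto); pose proof (pos_INR n).
  split; [apply Rmult_le_pos; [auto | left; apply Rinv_0_lt_compat; auto] |].
  apply (Rmult_lt_reg_r (INR N)); auto; field_simplify; lra.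
Qed.

Section Propagator.

Variables N m : nat.
Hypothesis HN : (0 < N)%nat.

Local Notation h := (hbar N).

Let HNpos : 0 < INR N := lt_0_INR N HN.

Lemma hbar_pos : 0 < h.
Proof. unfold hbar; pose proof PI_RGT_0; apply Rinv_0_lt_compat; nra. Qed.

Lemma div_hbar t : t / h = 2 * PI * INR N * t.
Proof. unfold hbar, Rdiv; rewrite Rinv_inv; ring. Qed.

Lemma two_PI_hbar : 2 * PI * h = / INR N.
Proof. unfold hbar; pose proof PI_RGT_0; field; lra. Qed.

Lemma Phi_comb : IsComb (/ INR N) N (Phi N m).
Proof.
  repeat split; auto; [apply Rinv_0_lt_compat; auto | |].
  - intros x Hx; destruct (classic (exists k : Z, x = INR m / INR N + IZR k)) as [[k ->] | Hn].
    + exists (Z.of_nat m + k * Z.of_nat N)%Z.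
      rewrite plus_IZR, mult_IZR, <- !INR_IZR_INZ; field; lra.
    + exfalso; apply Hx; unfold Phi; rewrite ind_false by auto; ring.
  - intros x; unfold Phi; f_equal; apply ind_iff.
    replace (INR N * / INR N) with 1 by (field; lra).
    split; intros [k Hk].
    + exists (k - 1)%Z; rewrite minus_IZR; lra.
    + exists (k + 1)%Z; rewrite plus_IZR; lra.
Qed.

Definition Phi_mom : comb := toMom h (Phi N m).

Lemma Phi_mom_comb : IsComb (/ INR N) N Phi_mom.
Proof.
  pose proof hbar_pos.
  assert (E : 2 * PI * h / (INR N * / INR N) = / INR N) by (rewrite two_PI_hbar; field; lra).
  unfold Phi_mom, toMom; rewrite (dft_eq (-1) h (/ INR N) N) by (auto using Phi_comb; lra).
  rewrite <- E at 1; apply dft_with_comb; auto; apply Rinv_0_lt_compat; auto.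
Qed.

Lemma Phi_mom_add1 p : Phi_mom (p + 1) = Phi_mom p.
Proof.
  pose proof Phi_mom_comb as (_ & _ & _ & Hper).
  replace (p + 1) with (p + INR N * / INR N) by (field; lra); apply Hper.
Qed.

Lemma mulind_Phi_mom_comb P : (forall x, P (x + 2) <-> P x) ->
  IsComb (/ INR N) (N * 2) (mulind P Phi_mom).
Proof.
  intros HP; apply IsComb_mulind; [apply IsComb_mul_period; auto using Phi_mom_comb |].
  intros x; replace (INR (N * 2) * / INR N) with 2 by (rewrite mult_INR; simpl; field; lra).
  apply HP.
Qed.

Definition pos_weight : R -> C := lattice_weight h 2.

Definition mom_sum (x : R) : C :=
  csum N (fun n => (Phi_mom (INR n / INR N)%R * cexpi (x * (INR n / INR N) / h)%R)%C).

Lemma lattice_two_hbar : 2 * PI * h / 2 = / (2 * INR N).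
Proof. rewrite two_PI_hbar; field; lra. Qed.

Lemma pos_weight_add_half x k : pos_weight (x + IZR k / 2) = pos_weight x.
Proof.
  unfold pos_weight; rewrite <- (lattice_weight_shift h 2 x (k * Z.of_nat N)); f_equal.
  rewrite lattice_two_hbar, mult_IZR, <- INR_IZR_INZ; field; lra.
Qed.

Lemma pos_weight_off x : ~ on_lattice (/ (2 * INR N)) x -> pos_weight x = 0%C.
Proof. intros H; apply lattice_weight_off; rewrite lattice_two_hbar; auto. Qed.

Lemma mom_sum_add1 x : mom_sum (x + 1) = mom_sum x.
Proof.
  apply csum_ext; intros n _; f_equal.
  replace ((x + 1) * (INR n / INR N) / h) with (x * (INR n / INR N) / h + 2 * PI * IZR (Z.of_nat n))
    by (rewrite <- INR_IZR_INZ, !div_hbar; field; lra).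
  rewrite cexpi_add, cexpi_2PI_mult; ring.
Qed.

Lemma toPos_mulind_Phi_mom P : (forall x, P (x + 2) <-> P x) ->
  toPos h (mulind P Phi_mom) = dft_with 1 h (/ INR N) (N * 2) (mulind P Phi_mom).
Proof.
  intros HP; pose proof hbar_pos; apply dft_eq; auto using mulind_Phi_mom_comb; lra.
Qed.

Lemma Ep_Phi x : Ep h (Phi N m) x = (pos_weight x * mom_sum x)%C.
Proof.
  change (Ep h (Phi N m) x) with (toPos h (mulind Eset Phi_mom) x).
  rewrite toPos_mulind_Phi_mom by apply Eset_add2; unfold dft_with.
  replace (INR (N * 2) * / INR N) with 2 by (rewrite mult_INR; simpl; field; lra).
  replace (N * 2)%nat with (N + N)%nat by lia; f_equal.
  rewrite csum_add_eq0_r.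
  - apply csum_ext; intros n Hn; unfold mulind.
    rewrite ind_true by apply Eset_not_Oset_01, INR_div_lt1, Hn.
    rewrite Rmult_1_l, Cmult_1_l; reflexivity.
  - intros n Hn; unfold mulind; rewrite ind_false; [ring |].
    apply Oset_not_Eset_12; rewrite plus_INR.
    pose proof (INR_div_lt1 n N Hn); unfold Rdiv in *.
    replace ((INR N + INR n) * / INR N) with (1 + INR n * / INR N) by (field; lra); lra.
Qed.

Lemma Op_Phi x : Op h (Phi N m) x = (pos_weight x * (cexpi (x / h) * mom_sum x))%C.
Proof.
  change (Op h (Phi N m) x) with (toPos h (mulind Oset Phi_mom) x).
  rewrite toPos_mulind_Phi_mom by apply Oset_add2; unfold dft_with.
  replace (INR (N * 2) * / INR N) with 2 by (rewrite mult_INR; simpl; field; lra).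
  replace (N * 2)%nat with (N + N)%nat by lia; f_equal.
  rewrite csum_add_eq0_l.
  - unfold mom_sum; rewrite Cmult_comm, <- csum_mulr.
    apply csum_ext; intros n Hn; unfold mulind; pose proof (INR_div_lt1 n N Hn).
    replace (INR (N + n) * / INR N) with (INR n / INR N + 1) by (rewrite plus_INR; field; lra).
    rewrite ind_true by (apply Oset_not_Eset_12; lra).
    rewrite Phi_mom_add1, Rmult_1_l, Rmult_plus_distr_l, Rmult_1_r, Rdiv_plus_distr, cexpi_add.
    ring.
  - intros n Hn; unfold mulind; rewrite ind_false; [ring |].
    apply Eset_not_Oset_01, INR_div_lt1, Hn.
Qed.

Definition PhiEO : comb := cadd (Ep h (Phi N m)) (Yop (- / 2) (Op h (Phi N m))).

Definition PhiLR : comb := cadd (Lop PhiEO) (Xop h (-1) (Rop PhiEO)).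

Lemma PhiEO_off x : ~ on_lattice (/ (2 * INR N)) x -> PhiEO x = 0%C.
Proof.
  intros Hx; unfold PhiEO, cadd, Yop; rewrite Ep_Phi, Op_Phi.
  replace (x + - / 2) with (x + IZR (-1) / 2) by (simpl; field).
  rewrite pos_weight_add_half, pos_weight_off by auto; ring.
Qed.

Lemma Fop_Phi_supp y : Fop h (Phi N m) y <> 0%C -> on_lattice (/ INR N) y.
Proof.
  change (Fop h (Phi N m)) with (Sop PhiLR); unfold Sop, PhiLR, cadd, Lop, Rop, Xop, mulind.
  intros H; apply NNPP; intros Hoff; apply H.
  rewrite PhiEO_off; [ring |].
  intros [k Hk]; apply Hoff; exists k; replace y with (2 * (y / 2)) by field.
  rewrite Hk; field; lra.
Qed.

Lemma lattice_phase x l : x = IZR l * / (2 * INR N) -> x / h = PI * IZR l.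
Proof. intros ->; rewrite div_hbar; field; lra. Qed.

Lemma cexpi_lattice_div_hbar y : on_lattice (/ INR N) y -> cexpi (1 * y / h) = 1%C.
Proof.
  intros [k ->]; replace (1 * (IZR k * / INR N) / h) with (2 * PI * IZR k)
    by (rewrite div_hbar; field; lra).
  apply cexpi_2PI_mult.
Qed.

Hypothesis HNeven : Nat.Even N.

Lemma cexpi_half_div_hbar : cexpi (- / 2 / h) = 1%C.
Proof.
  destruct HNeven as [N' HN'].
  replace (- / 2 / h) with (- (2 * PI * IZR (Z.of_nat N')))
    by (rewrite div_hbar, <- INR_IZR_INZ, HN', mult_INR; simpl; field).
  apply cexpi_opp_eq1, cexpi_2PI_mult.
Qed.

Lemma PhiEO_add_half x : PhiEO (x + / 2) = (cexpi (-1 * x / h) * PhiEO x)%C.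
Proof.
  unfold PhiEO, cadd, Yop; rewrite !Ep_Phi, !Op_Phi.
  replace (x + / 2 + - / 2) with x by field.
  replace (x + / 2) with (x + - / 2 + 1) at 2 by field; rewrite mom_sum_add1.
  replace (x + / 2) with (x + IZR 1 / 2) by (simpl; field).
  replace (x + - / 2) with (x + IZR (-1) / 2) by (simpl; field).
  rewrite !pos_weight_add_half.
  destruct (classic (on_lattice (/ (2 * INR N)) x)) as [[l Hl] | Hoff].
  2: { rewrite pos_weight_off by auto; ring. }
  pose proof hbar_pos as Hh; pose proof (lattice_phase x l Hl) as Hx.
  assert (E1 : cexpi (-1 * x / h) = cexpi (x / h)).
  { replace (-1 * x / h) with (- (x / h)) by (field; lra).
    rewrite Hx; apply cexpi_opp_PI_mult. }
  assert (E2 : cexpi ((x + IZR (-1) / 2) / h) = cexpi (x / h)).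
  { replace ((x + IZR (-1) / 2) / h) with (x / h + - / 2 / h) by (simpl; field; lra).
    rewrite cexpi_add, cexpi_half_div_hbar; ring. }
  assert (E3 : (cexpi (x / h) * cexpi (x / h))%C = 1%C).
  { rewrite <- cexpi_add, Hx; replace (PI * IZR l + PI * IZR l) with (2 * PI * IZR l) by ring.
    apply cexpi_2PI_mult. }
  rewrite E1, E2.
  set (A := mom_sum (x + IZR (-1) / 2)).
  replace (pos_weight x * A)%C with (cexpi (x / h) * cexpi (x / h) * (pos_weight x * A))%C at 1
    by (rewrite E3; ring).
  ring.
Qed.

Lemma PhiLR_add_half x : PhiLR (x + / 2) = PhiLR x.
Proof.
  unfold PhiLR, cadd, Lop, Rop, Xop, mulind.
  rewrite PhiEO_add_half, (ind_iff _ _ (Lset_add_half x)), (ind_iff _ _ (Rset_add_half x)).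
  destruct (classic (on_lattice (/ (2 * INR N)) x)) as [[l Hl] | Hoff].
  2: { rewrite PhiEO_off by auto; ring. }
  pose proof hbar_pos as Hh; pose proof (lattice_phase x l Hl) as Hx.
  assert (E : (cexpi (-1 * (x + / 2) / h) * cexpi (-1 * x / h))%C = 1%C).
  { rewrite <- cexpi_add.
    replace (-1 * (x + / 2) / h + -1 * x / h) with (2 * PI * IZR (- l) + - / 2 / h)
      by (replace (2 * PI * IZR (- l)) with (- (2 * (PI * IZR l))) by (rewrite opp_IZR; ring);
          rewrite <- Hx; field; lra).
    rewrite cexpi_add, cexpi_2PI_mult, cexpi_half_div_hbar; ring. }
  set (A := cexpi (-1 * x / h)) in *.
  replace (ind (Lset x) * PhiEO x)%C
    with (cexpi (-1 * (x + / 2) / h) * A * (ind (Lset x) * PhiEO x))%C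
    by (rewrite E; ring).
  ring.
Qed.

Lemma Fop_Phi_add1 y : Fop h (Phi N m) (y + 1) = Fop h (Phi N m) y.
Proof.
  change (Fop h (Phi N m)) with (Sop PhiLR); unfold Sop.
  replace ((y + 1) / 2) with (y / 2 + / 2) by field; rewrite PhiLR_add_half; reflexivity.
Qed.

End Propagator.

Theorem mainTheorem4 (N : nat) (hN : (0 < N)%nat) (hev : Nat.even N = true)
  (m : nat) (hm : (m < N)%nat) :
  Xop (hbar N) 1 (Fop (hbar N) (Phi N m)) = Fop (hbar N) (Phi N m) /\
  Yop 1 (Fop (hbar N) (Phi N m)) = Fop (hbar N) (Phi N m).
Proof.
  split; apply functional_extensionality; intros y; unfold Xop, Yop.
  - destruct (classic (Fop (hbar N) (Phi N m) y = 0%C)) as [E | E]; [rewrite E; ring |].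
    rewrite (cexpi_lattice_div_hbar N hN y (Fop_Phi_supp N m hN y E)); ring.
  - apply Fop_Phi_add1; [| apply Nat.even_spec]; auto.
Qed.
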